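(* Let $p,q\in\Bbbk^\times$. If $B(q)\cong B(p)$, then $p=q$.
   Context: $\Bbbk$ is an algebraically closed field of characteristic zero. Paths are written left to right. Let $Q$ be the quiver with vertices $e_1,e_2$, a loop $a$ at $e_1$, a loop $c$ at $e_2$, and arrows $b:e_1\to e_2$, $d:e_2\to e_1$; for $q\in\Bbbk^\times$, $B(q)=\Bbbk Q/(ab-bc,\ cd-q\,da)$. *)

From HB Require Import structures.
From mathcomp Require Import all_boot all_order all_algebra.
Set Implicit Arguments. Unset Strict Implicit. Unset Printing Implicit Defensive.
Import GRing.Theory.
Local Open Scope ring_scope.

Definition alg_hom (k : fieldType) (A R : algType k) (f : A -> R) : Prop :=
  [/\ forall x y : A, f (x + y) = f x + f y,
      forall (l : k) (x : A), f (l *: x) = l *: f x,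
      forall x y : A, f (x * y) = f x * f y
    & f 1 = 1].

Definition alg_iso (k : fieldType) (A R : algType k) : Prop :=
  exists f : A -> R, alg_hom f /\ bijective f.

(* Defining relations of B(q) in an algebra R, for the quiver Q with
   vertices e1 e2, loop a at e1, loop c at e2, b : e1 -> e2, d : e2 -> e1.
   Paths are written left to right, so an arrow x : i -> j satisfies
   x = e_i * x * e_j; the trivial paths e1, e2 form a complete set of
   orthogonal idempotents. *)
Definition B_rels (k : fieldType) (R : algType k) (q : k)
    (e1 e2 a b c d : R) : Prop :=
  [/\ [/\ e1 * e1 = e1, e2 * e2 = e2, e1 * e2 = 0, e2 * e1 = 0 & e1 + e2 = 1],
      [/\ a = e1 * a * e1, b = e1 * b * e2, c = e2 * c * e2 & d = e2 * d * e1]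
    & a * b = b * c /\ c * d = q *: (d * a)].

(* (A; e1,e2,a,b,c,d) is the algebra B(q) = kQ/(ab - bc, cd - q da):
   it satisfies the relations and is universal (initial) among k-algebras
   equipped with elements satisfying them. This characterizes kQ/I up to
   unique isomorphism (kQ is the free algebra on a complete set of orthogonal
   idempotents indexed by vertices and arrows x with x = e_s(x) x e_t(x)). *)
Definition is_B (k : fieldType) (A : algType k) (q : k)
    (e1 e2 a b c d : A) : Prop :=
  B_rels q e1 e2 a b c d /\
  forall (R : algType k) (e1' e2' a' b' c' d' : R),
    B_rels q e1' e2' a' b' c' d' ->
    (exists f : A -> R, alg_hom f /\
       [/\ f e1 = e1', f e2 = e2', f a = a' & [/\ f b = b', f c = c' & f d = d']])
    /\ (forall f g : A -> R, alg_hom f -> alg_hom g ->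
          [/\ f e1 = g e1, f e2 = g e2, f a = g a
            & [/\ f b = g b, f c = g c & f d = g d]] ->
          f =1 g).

(* Let W(q) be the quotient of B(q) by all paths of length at least 2 other
   than ab = bc and da = q^-1 cd; it has basis e1, e2, a, b, c, d, ab, da.
   An isomorphism B(q) ~= B(p) yields a surjection tau : B(p) -> W(q).  The
   idempotent tau(e1) is 0, 1, or conjugate to e1 or e2.  In the first two
   cases tau factors through a polynomial ring, although W(q) is not
   commutative.  Otherwise, after conjugating tau(e1) to e1 or e2, the
   relations ab = bc and cd = p da, evaluated in W(q) where cd = q da, force
   for p <> q the images of the generators into one of the proper subalgebras
   on which the a-, b- or d-coordinate vanishes; by the uniqueness part of the
   universal property of B(p), so does all of tau(B(p)) = W(q). *)

From HB Require Import structures.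
From mathcomp Require Import all_boot all_order all_algebra.
From mathcomp Require Import ring.
Set Implicit Arguments. Unset Strict Implicit. Unset Printing Implicit Defensive.
Import GRing.Theory.
Local Open Scope ring_scope.

Definition agree6 (A R : Type) (f g : A -> R) (e1 e2 a b c d : A) : Prop :=
  [/\ f e1 = g e1, f e2 = g e2, f a = g a & [/\ f b = g b, f c = g c & f d = g d]].

Section AlgHom.
Variable k : fieldType.
Implicit Types A R : algType k.

Lemma alg_hom0 A R (f : A -> R) : alg_hom f -> f 0 = 0.
Proof. by case=> fD _ _ _; apply: (addrI (f 0)); rewrite -fD !addr0. Qed.

Lemma comp_hom A (B : algType k) R (f : A -> B) (g : B -> R) :
  alg_hom f -> alg_hom g -> alg_hom (g \o f).
Proof.
case=> fD fZ fM f1 [gD gZ gM g1]; split=> /= *.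
- by rewrite fD gD.
- by rewrite fZ gZ.
- by rewrite fM gM.
- by rewrite f1 g1.
Qed.

Lemma can_hom A (B : algType k) (f : A -> B) (g : B -> A) :
  alg_hom f -> cancel f g -> cancel g f -> alg_hom g.
Proof.
case=> fD fZ fM f1 fK gK; split=> *; apply: (can_inj fK).
- by rewrite fD !gK.
- by rewrite fZ !gK.
- by rewrite fM !gK.
- by rewrite f1 gK.
Qed.

Lemma conj_hom R (u u' : R) :
  u * u' = 1 -> u' * u = 1 -> alg_hom (fun x => u * x * u').
Proof.
move=> uu' u'u; split=> [x y|l x|x y|].
- by rewrite mulrDr mulrDl.
- by rewrite -scalerAr -scalerAl.
- by rewrite !mulrA -[u * x * u' * u]mulrA u'u mulr1.
- by rewrite mulr1.
Qed.

Lemma conj_cancel (T : Type) R (tau : T -> R) (s : R -> T) (u u' : R) :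
  cancel s tau -> u * u' = 1 ->
  cancel (s \o fun y => u' * y * u) ((fun x => u * x * u') \o tau).
Proof. by move=> hs uu' y /=; rewrite hs !mulrA uu' mul1r -mulrA uu' mulr1. Qed.

Lemma horner_alg_hom R (z : R) : alg_hom (horner_alg z).
Proof.
by split=> [x y|l x|x y|]; rewrite ?rmorphD ?rmorphM ?rmorph1 // linearZ_LR /= mulr_algl.
Qed.

Lemma B_rels_hom A R (f : A -> R) (p : k) e1 e2 a b c d :
  alg_hom f -> B_rels p e1 e2 a b c d ->
  B_rels p (f e1) (f e2) (f a) (f b) (f c) (f d).
Proof.
move=> hf; have f0 := alg_hom0 hf; case: hf => fD fZ fM f1.
case=> [[h11 h22 h12 h21 h1] [ha hb hc hd] [hab hcd]].
by split; split; rewrite -?fM -?fD -?fZ ?h11 ?h22 ?h12 ?h21 ?h1 ?f0 -?ha -?hb -?hc -?hd ?hab ?hcd.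
Qed.

Lemma B_rels_vertex1 R (p : k) (x : R) : B_rels p 1 0 x 0 0 0.
Proof. by split; split; rewrite ?(mul0r, mulr0, mul1r, mulr1, addr0, scaler0). Qed.

Lemma B_rels_vertex2 R (p : k) (x : R) : B_rels p 0 1 0 0 x 0.
Proof. by split; split; rewrite ?(mul0r, mulr0, mul1r, mulr1, add0r, scaler0). Qed.

Section Universal.
Variables (p : k) (A : algType k) (e1 e2 a b c d : A).
Hypothesis HB : is_B p e1 e2 a b c d.

Lemma is_B_hom_ext R (f g : A -> R) :
  alg_hom f -> alg_hom g -> agree6 f g e1 e2 a b c d -> f =1 g.
Proof. by move=> hf; exact: (HB.2 R _ _ _ _ _ _ (B_rels_hom hf HB.1)).2. Qed.

Lemma is_B_comm R (tau : A -> R) : alg_hom tau -> tau e1 = 0 \/ tau e2 = 0 ->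
  forall x y, tau x * tau y = tau y * tau x.
Proof.
move=> htau tau0.
have [[_ _ _ _ sum1] [ha hb hc hd] _] := B_rels_hom htau HB.1.
suff [z [F [hF tauF]]] : exists z F, alg_hom F /\ tau =1 horner_alg z \o F.
  by move=> x y; rewrite !tauF /= -!rmorphM mulrC.
case: tau0 => tau0.
- have tau1 : tau e2 = 1 by rewrite -sum1 tau0 add0r.
  have [F [hF [F1 F2 Fa [Fb Fc Fd]]]] := (HB.2 _ _ _ _ _ _ _ (B_rels_vertex2 p 'X)).1.
  exists (tau c), F; split=> //; apply: is_B_hom_ext (comp_hom hF (horner_alg_hom _)) _ => //.
  rewrite /agree6 /= F1 F2 Fa Fb Fc Fd horner_algX rmorph0 rmorph1 ha hb hd tau0.
  by rewrite !(mul0r, mulr0).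
- have tau1 : tau e1 = 1 by rewrite -sum1 tau0 addr0.
  have [F [hF [F1 F2 Fa [Fb Fc Fd]]]] := (HB.2 _ _ _ _ _ _ _ (B_rels_vertex1 p 'X)).1.
  exists (tau a), F; split=> //; apply: is_B_hom_ext (comp_hom hF (horner_alg_hom _)) _ => //.
  rewrite /agree6 /= F1 F2 Fa Fb Fc Fd horner_algX rmorph0 rmorph1 hb hc hd tau0.
  by rewrite !(mul0r, mulr0).
Qed.
End Universal.
End AlgHom.

Lemma scalar_idem (k : fieldType) (x : k) : x * x = x -> x = 0 \/ x = 1.
Proof.
move=> hx; have : x * (x - 1) = 0 by rewrite mulrBr hx mulr1 subrr.
by move/eqP; rewrite mulf_eq0 subr_eq0 => /orP[] /eqP; [left | right].
Qed.

Lemma idem_intertwine (R : pzRingType) (e E : R) : e * e = e -> E * E = E ->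
  (e * E + (1 - e) * (1 - E)) * E = e * (e * E + (1 - e) * (1 - E)).
Proof.
move=> he hE; transitivity (e * E).
  by rewrite mulrDl -!mulrA hE [(1 - E) * E]mulrBl mul1r hE subrr mulr0 addr0.
by rewrite mulrDr !mulrA he [e * (1 - e)]mulrBr mulr1 he subrr mul0r addr0.
Qed.

(* W(q), by its coordinates on the basis e1, e2, a, b, c, d, ab, da. *)
Record truncB (k : fieldType) (q : k) :=
  TruncB { t1 : k; t2 : k; ta : k; tb : k; tc : k; td : k; tab : k; tda : k }.
Arguments TruncB {k q}.
Arguments t1 {k q}. Arguments t2 {k q}. Arguments ta {k q}. Arguments tb {k q}.
Arguments tc {k q}. Arguments td {k q}. Arguments tab {k q}. Arguments tda {k q}.

Section TruncB.
Variables (k : fieldType) (q : k).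
Local Notation W := (truncB q).

Definition truncB_tuple (x : W) :=
  (t1 x, t2 x, ta x, tb x, tc x, td x, tab x, tda x).
Definition tuple_truncB (v : k * k * k * k * k * k * k * k) : W :=
  let: (x1, x2, xa, xb, xc, xd, xab, xda) := v in TruncB x1 x2 xa xb xc xd xab xda.
Lemma truncB_tupleK : cancel truncB_tuple tuple_truncB. Proof. by case. Qed.
HB.instance Definition _ := Choice.copy W (can_type truncB_tupleK).

Lemma truncB_eq (x y : W) :
  t1 x = t1 y -> t2 x = t2 y -> ta x = ta y -> tb x = tb y ->
  tc x = tc y -> td x = td y -> tab x = tab y -> tda x = tda y -> x = y.
Proof. by case: x; case: y => /= *; congr TruncB. Qed.

Ltac truncB_ring := move=> *; apply: truncB_eq => /=; ring.

Definition truncB_add (x y : W) : W :=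
  TruncB (t1 x + t1 y) (t2 x + t2 y) (ta x + ta y) (tb x + tb y)
         (tc x + tc y) (td x + td y) (tab x + tab y) (tda x + tda y).
Definition truncB_opp (x : W) : W :=
  TruncB (- t1 x) (- t2 x) (- ta x) (- tb x) (- tc x) (- td x) (- tab x) (- tda x).
Definition truncB_zero : W := TruncB 0 0 0 0 0 0 0 0.

Lemma truncB_addA : associative truncB_add. Proof. truncB_ring. Qed.
Lemma truncB_addC : commutative truncB_add. Proof. truncB_ring. Qed.
Lemma truncB_add0 : left_id truncB_zero truncB_add. Proof. truncB_ring. Qed.
Lemma truncB_addN : left_inverse truncB_zero truncB_opp truncB_add.
Proof. truncB_ring. Qed.
HB.instance Definition _ :=
  GRing.isZmodule.Build W truncB_addA truncB_addC truncB_add0 truncB_addN.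

Definition truncB_one : W := TruncB 1 1 0 0 0 0 0 0.
(* Paths multiply by concatenation, with ab = bc, cd = q da and every other
   path of length 2 equal to 0. *)
Definition truncB_mul (x y : W) : W :=
  TruncB (t1 x * t1 y) (t2 x * t2 y)
    (t1 x * ta y + ta x * t1 y) (t1 x * tb y + tb x * t2 y)
    (t2 x * tc y + tc x * t2 y) (t2 x * td y + td x * t1 y)
    (t1 x * tab y + tab x * t2 y + ta x * tb y + tb x * tc y)
    (t2 x * tda y + tda x * t1 y + q * tc x * td y + td x * ta y).

Lemma truncB_mulA : associative truncB_mul. Proof. truncB_ring. Qed.
Lemma truncB_1mul : left_id truncB_one truncB_mul. Proof. truncB_ring. Qed.
Lemma truncB_mul1 : right_id truncB_one truncB_mul. Proof. truncB_ring. Qed.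
Lemma truncB_mulDl : left_distributive truncB_mul truncB_add. Proof. truncB_ring. Qed.
Lemma truncB_mulDr : right_distributive truncB_mul truncB_add. Proof. truncB_ring. Qed.
Lemma truncB_one_neq0 : truncB_one != truncB_zero.
Proof. by apply/eqP => /(congr1 t1) /= /eqP; rewrite oner_eq0. Qed.
HB.instance Definition _ := GRing.Zmodule_isNzRing.Build W
  truncB_mulA truncB_1mul truncB_mul1 truncB_mulDl truncB_mulDr truncB_one_neq0.

Definition truncB_scale (l : k) (x : W) : W :=
  TruncB (l * t1 x) (l * t2 x) (l * ta x) (l * tb x)
         (l * tc x) (l * td x) (l * tab x) (l * tda x).
Lemma truncB_scaleA l m x : truncB_scale l (truncB_scale m x) = truncB_scale (l * m) x.
Proof. truncB_ring. Qed.
Lemma truncB_scale1 : left_id 1 truncB_scale. Proof. truncB_ring. Qed.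
Lemma truncB_scaleDr : right_distributive truncB_scale +%R. Proof. truncB_ring. Qed.
Lemma truncB_scaleDl x : {morph truncB_scale^~ x : l m / l + m}. Proof. truncB_ring. Qed.
HB.instance Definition _ := GRing.Zmodule_isLmodule.Build k W
  truncB_scaleA truncB_scale1 truncB_scaleDr truncB_scaleDl.
Lemma truncB_scaleAl (l : k) (x y : W) : l *: (x * y) = (l *: x) * y.
Proof. truncB_ring. Qed.
HB.instance Definition _ := GRing.Lmodule_isLalgebra.Build k W truncB_scaleAl.
Lemma truncB_scaleAr (l : k) (x y : W) : l *: (x * y) = x * (l *: y).
Proof. truncB_ring. Qed.
HB.instance Definition _ := GRing.Lalgebra_isAlgebra.Build k W truncB_scaleAr.

Definition tE1 : W := TruncB 1 0 0 0 0 0 0 0.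
Definition tE2 : W := TruncB 0 1 0 0 0 0 0 0.
Definition tA : W := TruncB 0 0 1 0 0 0 0 0.
Definition tB : W := TruncB 0 0 0 1 0 0 0 0.
Definition tC : W := TruncB 0 0 0 0 1 0 0 0.
Definition tD : W := TruncB 0 0 0 0 0 1 0 0.

(* proj_x retracts W(q) onto the subalgebra spanned by e1, e2 and the arrow
   x, along the ideal of paths through the other arrows; it agrees with proj_e
   exactly where the x-coordinate vanishes. *)
Definition proj_e (x : W) : W := TruncB (t1 x) (t2 x) 0 0 0 0 0 0.
Definition proj_a (x : W) : W := TruncB (t1 x) (t2 x) (ta x) 0 0 0 0 0.
Definition proj_b (x : W) : W := TruncB (t1 x) (t2 x) 0 (tb x) 0 0 0 0.
Definition proj_d (x : W) : W := TruncB (t1 x) (t2 x) 0 0 0 (td x) 0 0.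

Definition misses_arrow (E1 E2 A B C D : W) : Prop :=
  [\/ agree6 proj_a proj_e E1 E2 A B C D, agree6 proj_b proj_e E1 E2 A B C D
     | agree6 proj_d proj_e E1 E2 A B C D].

Lemma truncB_rels : B_rels q tE1 tE2 tA tB tC tD.
Proof. by split; split; apply: truncB_eq => /=; ring. Qed.

Lemma truncB_noncomm : tE1 * tB != tB * tE1.
Proof.
by apply/eqP => /(congr1 tb) /= /eqP; rewrite !(mulr1, mul0r, mulr0, addr0) oner_eq0.
Qed.

Lemma truncB_corner11 x : tE1 * x * tE1 = TruncB (t1 x) 0 (ta x) 0 0 0 0 0.
Proof. by apply: truncB_eq => /=; ring. Qed.
Lemma truncB_corner12 x : tE1 * x * tE2 = TruncB 0 0 0 (tb x) 0 0 (tab x) 0.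
Proof. by apply: truncB_eq => /=; ring. Qed.
Lemma truncB_corner22 x : tE2 * x * tE2 = TruncB 0 (t2 x) 0 0 (tc x) 0 0 0.
Proof. by apply: truncB_eq => /=; ring. Qed.
Lemma truncB_corner21 x : tE2 * x * tE1 = TruncB 0 0 0 0 0 (td x) 0 (tda x).
Proof. by apply: truncB_eq => /=; ring. Qed.

Lemma rels_at_e1_misses_arrow (p : k) (E2 A B C D : W) : p != q -> B_rels p tE1 E2 A B C D ->
  misses_arrow tE1 E2 A B C D.
Proof.
move=> npq [[_ _ _ _ hE2]].
have -> : E2 = tE2 by apply: (addrI tE1); rewrite hE2; apply: truncB_eq => /=; ring.
move=> [-> -> -> ->]; rewrite truncB_corner11 truncB_corner12 truncB_corner22 truncB_corner21.
move: (t1 A) (ta A) (tb B) (tab B) (t2 C) (tc C) (td D) (tda D).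
move=> α0 α β β' γ0 γ δ δ' [hab hcd].
move: (congr1 tb hab) (congr1 tab hab) (congr1 td hcd) (congr1 tda hcd) => /=.
rewrite !(mul0r, mulr0, add0r, addr0) => eb eab ed eda.
have [->|nβ] := eqVneq β 0; first by apply: Or32.
have [->|nδ] := eqVneq δ 0; first by apply: Or33.
have eγ0 : γ0 = α0 by apply: (mulIf nβ); rewrite eb mulrC.
subst γ0.
have eγ : γ = α by apply: (mulfI nβ); apply: (addrI (β' * α0)); rewrite -eab; ring.
subst γ.
have eα0 : α0 = p * α0 by apply: (mulIf nδ); rewrite ed; ring.
have : α * ((q - p) * δ) = p * α0 * δ' + q * α * δ - p * (δ' * α0 + δ * α) by ring.
rewrite -eα0 eda subrr => /eqP.
rewrite !mulf_eq0 subr_eq0 (eq_sym q) (negbTE npq) (negbTE nδ) !orbF => /eqP ->.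
by apply: Or31.
Qed.

Lemma rels_at_e2_misses_arrow (p : k) (E2 A B C D : W) : p != q -> B_rels p tE2 E2 A B C D ->
  misses_arrow tE2 E2 A B C D.
Proof.
move=> npq [[_ _ _ _ hE2]].
have -> : E2 = tE1 by apply: (addrI tE2); rewrite hE2; apply: truncB_eq => /=; ring.
move=> [-> -> -> ->]; rewrite truncB_corner11 truncB_corner12 truncB_corner22 truncB_corner21.
move: (t2 A) (tc A) (td B) (tda B) (t1 C) (ta C) (tb D) (tab D).
move=> α0 α β β' γ0 γ δ δ' [hab hcd].
move: (congr1 td hab) (congr1 tda hab) (congr1 tb hcd) (congr1 tab hcd) => /=.
rewrite !(mul0r, mulr0, add0r, addr0) => ed eda eb eab.
have [->|nβ] := eqVneq β 0; first by apply: Or33.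
have [->|nδ] := eqVneq δ 0; first by apply: Or32.
have eγ0 : γ0 = α0 by apply: (mulIf nβ); rewrite ed mulrC.
subst γ0.
have eγ : γ = q * α by apply: (mulfI nβ); apply: (addrI (β' * α0)); rewrite -eda; ring.
subst γ.
have eα0 : α0 = p * α0 by apply: (mulIf nδ); rewrite eb; ring.
have : α * ((q - p) * δ) = p * α0 * δ' + q * α * δ - p * (δ' * α0 + δ * α) by ring.
rewrite -eα0 eab subrr => /eqP.
rewrite !mulf_eq0 subr_eq0 (eq_sym q) (negbTE npq) (negbTE nδ) !orbF => /eqP ->.
by rewrite mulr0; apply: Or31.
Qed.

Lemma proj_e_hom : alg_hom proj_e.
Proof. by split=> *; apply: truncB_eq => /=; ring. Qed.
Lemma proj_a_hom : alg_hom proj_a.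
Proof. by split=> *; apply: truncB_eq => /=; ring. Qed.
Lemma proj_b_hom : alg_hom proj_b.
Proof. by split=> *; apply: truncB_eq => /=; ring. Qed.
Lemma proj_d_hom : alg_hom proj_d.
Proof. by split=> *; apply: truncB_eq => /=; ring. Qed.

Definition truncB_section (A : algType k) (e1 e2 a b c d : A) (y : W) : A :=
  t1 y *: e1 + t2 y *: e2 + ta y *: a + tb y *: b + tc y *: c + td y *: d
  + tab y *: (a * b) + tda y *: (d * a).

Lemma truncB_sectionK (A : algType k) (e1 e2 a b c d : A) (psi : A -> W) :
  alg_hom psi ->
  [/\ psi e1 = tE1, psi e2 = tE2, psi a = tA & [/\ psi b = tB, psi c = tC & psi d = tD]] ->
  cancel (truncB_section e1 e2 a b c d) psi.
Proof.
case=> fD fZ fM _ [h1 h2 ha [hb hc hd]] y.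
rewrite /truncB_section !fD !fZ !fM h1 h2 ha hb hc hd.
by apply: truncB_eq => /=; ring.
Qed.

Lemma truncB_radical_unit (j : W) : t1 j = 0 -> t2 j = 0 ->
  (1 + j) * (1 - j + j * j) = 1 /\ (1 - j + j * j) * (1 + j) = 1.
Proof. by case: j => /= ? ? ? ? ? ? ? ? -> ->; split; apply: truncB_eq => /=; ring. Qed.

Lemma truncB_radical_idem (E : W) : E * E = E -> t1 E = 0 -> t2 E = 0 -> E = 0.
Proof.
move=> hE h1 h2.
have E3 : E * E * E = 0.
  by case: E h1 h2 {hE} => /= ? ? ? ? ? ? ? ? -> ->; apply: truncB_eq => /=; ring.
by rewrite -E3 !hE.
Qed.

Lemma truncB_vertex_conj (e E : W) : e = tE1 \/ e = tE2 -> E * E = E ->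
  t1 E = t1 e -> t2 E = t2 e -> exists u u', [/\ u * u' = 1, u' * u = 1 & u * E * u' = e].
Proof.
move=> he hE h1 h2.
have e_idem : e * e = e by case: he => ->; apply: truncB_eq => /=; ring.
pose u := e * E + (1 - e) * (1 - E).
have [u' [uu' u'u]] : exists u', u * u' = 1 /\ u' * u = 1.
  have [j1 j2] : t1 (u - 1) = 0 /\ t2 (u - 1) = 0.
    by rewrite /= h1 h2; case: he => -> /=; split; ring.
  by have := truncB_radical_unit j1 j2; rewrite addrC subrK; exists (1 - (u - 1) + (u - 1) * (u - 1)).
exists u, u'; split=> //.
by rewrite /u idem_intertwine // -mulrA uu' mulr1.
Qed.

Lemma truncB_idem (E : W) : E * E = E ->
  [\/ E = 0, E = 1, exists u u', [/\ u * u' = 1, u' * u = 1 & u * E * u' = tE1]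
    | exists u u', [/\ u * u' = 1, u' * u = 1 & u * E * u' = tE2]].
Proof.
move=> hE; have := congr1 t1 hE; have := congr1 t2 hE.
rewrite /= => /scalar_idem[] h2 /scalar_idem[] h1.
- by apply: Or41; apply: truncB_radical_idem.
- by apply: Or43; apply: truncB_vertex_conj; rewrite ?h1 ?h2; auto.
- by apply: Or44; apply: truncB_vertex_conj; rewrite ?h1 ?h2; auto.
- apply: Or42; apply/esym/eqP; rewrite -subr_eq0; apply/eqP/truncB_radical_idem.
  + by rewrite mulrBl mul1r mulrBr mulr1 hE subrr subr0.
  + by rewrite /= h1 subrr.
  + by rewrite /= h2 subrr.
Qed.

End TruncB.

Arguments tE1 {k q}. Arguments tE2 {k q}. Arguments tA {k q}.
Arguments tB {k q}. Arguments tC {k q}. Arguments tD {k q}.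
Arguments proj_e {k q}. Arguments proj_a {k q}. Arguments proj_b {k q}. Arguments proj_d {k q}.
Arguments misses_arrow {k q}.

Section OntoTruncB.
Variables (k : fieldType) (p q : k) (A : algType k) (e1 e2 a b c d : A).
Hypothesis HB : is_B p e1 e2 a b c d.

Lemma onto_truncB_hits_arrows (tau : A -> truncB q) (s : truncB q -> A) :
  alg_hom tau -> cancel s tau ->
  ~ misses_arrow (tau e1) (tau e2) (tau a) (tau b) (tau c) (tau d).
Proof.
move=> htau hs.
have proj_onto π : alg_hom π ->
    agree6 π proj_e (tau e1) (tau e2) (tau a) (tau b) (tau c) (tau d) -> π =1 proj_e.
  move=> hπ agr y; rewrite -[y]hs.
  exact: (is_B_hom_ext HB (comp_hom htau hπ) (comp_hom htau (proj_e_hom q))).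
case=> agr.
- by move: (proj_onto _ (proj_a_hom q) agr tA) => /(congr1 ta) /= /eqP; rewrite oner_eq0.
- by move: (proj_onto _ (proj_b_hom q) agr tB) => /(congr1 tb) /= /eqP; rewrite oner_eq0.
- by move: (proj_onto _ (proj_d_hom q) agr tD) => /(congr1 td) /= /eqP; rewrite oner_eq0.
Qed.

Lemma B_onto_truncB (tau : A -> truncB q) (s : truncB q -> A) :
  alg_hom tau -> cancel s tau -> p = q.
Proof.
move=> htau hs; have [//|npq] := eqVneq p q; exfalso.
have [[tau_idem _ _ _ t12] _ _] := B_rels_hom htau HB.1.
have noncomm : ~ (forall x y, tau x * tau y = tau y * tau x).
  by move=> comm; apply: (negP (truncB_noncomm q)); rewrite -(hs tE1) -(hs tB) comm.
case: (truncB_idem tau_idem) => [tau_e1 | tau_e1 | [u [u' [uu' u'u ue]]] | [u [u' [uu' u'u ue]]]].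
- by apply: noncomm; apply: (is_B_comm HB htau); left.
- apply: noncomm; apply: (is_B_comm HB htau); right.
  by apply: (addrI 1); rewrite -tau_e1 t12 addr0.
- have hσ := comp_hom htau (conj_hom uu' u'u).
  apply: (onto_truncB_hits_arrows hσ (conj_cancel hs uu')).
  by have := B_rels_hom hσ HB.1; rewrite /= ue => /(rels_at_e1_misses_arrow npq).
- have hσ := comp_hom htau (conj_hom uu' u'u).
  apply: (onto_truncB_hits_arrows hσ (conj_cancel hs uu')).
  by have := B_rels_hom hσ HB.1; rewrite /= ue => /(rels_at_e2_misses_arrow npq).
Qed.

End OntoTruncB.

Theorem corollary2p11 (k : closedFieldType) (hchar : [pchar k] =i pred0)
    (p q : k) (hp : p != 0) (hq : q != 0)
    (Bq : algType k) (e1 e2 a b c d : Bq)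
    (Bp : algType k) (f1 f2 a' b' c' d' : Bp) :
  is_B q e1 e2 a b c d -> is_B p f1 f2 a' b' c' d' ->
  alg_iso Bq Bp -> p = q.
Proof.
move=> HBq HBp [phi [hphi [phi' phiK phi'K]]].
have [psi [hpsi psi_gens]] := (HBq.2 _ _ _ _ _ _ _ (truncB_rels q)).1.
apply: (B_onto_truncB HBp (comp_hom (can_hom hphi phiK phi'K) hpsi)
          (s := phi \o truncB_section e1 e2 a b c d)).
by move=> y /=; rewrite phiK (truncB_sectionK hpsi psi_gens).
Qed.
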